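(* Let $G=(V,E)$ be a directed multigraph with arc costs $c\in\mathbb{R}^E$ and gains $\gamma\in\mathbb{R}^E_{>0}$, and $u\in V$. Let $\mathcal{D}:=\{x\in\mathbb{R}^E_{\ge0}: x(\delta^+(u))=1,\ \nabla x_v=0\ \forall v\in V\setminus\{u\}\}$, let $f(\delta):=\inf_{x\in\mathcal{D}}\big(c^\top x-\delta(1-\sum_{e\in\delta^-(u)}\gamma_ex_e)\big)$, and consider the problem (F$_u$): $\inf\ c^\top x/(1-\sum_{e\in\delta^-(u)}\gamma_ex_e)$ subject to $1-\sum_{e\in\delta^-(u)}\gamma_ex_e>0$, $x\in\mathcal{D}$. Let $x$ be a feasible solution to (F$_u$) and $\bar\delta:=c^\top x/(1-\sum_{e\in\delta^-(u)}\gamma_ex_e)$. If either $f(\bar\delta)=-\infty$, or $f(\bar\delta)=c^\top\bar x-\bar\delta(1-\sum_{e\in\delta^-(u)}\gamma_e\bar x_e)<0$ for some $\bar x\in\mathcal{D}$ with $1-\sum_{e\in\delta^-(u)}\gamma_e\bar x_e\le0$, then the optimal value of (F$_u$) is $-\infty$.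
   Context: $\delta^+(v)$, $\delta^-(v)$ are the sets of arcs leaving/entering $v$; $x(F):=\sum_{e\in F}x_e$; the net flow at $v$ is $\nabla x_v:=\sum_{e\in\delta^+(v)}x_e-\sum_{e\in\delta^-(v)}\gamma_ex_e$. *)

From HB Require Import structures.
From mathcomp Require Import all_boot all_order all_algebra.
From mathcomp Require Import boolp classical_sets reals constructive_ereal ereal.
Set Implicit Arguments. Unset Strict Implicit. Unset Printing Implicit Defensive.
Import Order.TTheory GRing.Theory Num.Theory.
Local Open Scope ring_scope.
Local Open Scope classical_set_scope.

(* A directed multigraph is given by finite vertex/arc types V, E and
   tail/head maps; delta^+(v) = {e | tail e = v}, delta^-(v) = {e | head e = v}.
   Vectors in R^E are functions E -> R. *)

Definition net_flow (R : realType) (V E : finType) (tail head : E -> V)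
  (gamma : E -> R) (x : E -> R) (v : V) : R :=
  \sum_(e | tail e == v) x e - \sum_(e | head e == v) gamma e * x e.

Definition in_gain (R : realType) (V E : finType) (head : E -> V)
  (gamma : E -> R) (u : V) (x : E -> R) : R :=
  \sum_(e | head e == u) gamma e * x e.

Definition cost (R : realType) (E : finType) (c x : E -> R) : R :=
  \sum_e c e * x e.

Definition Dset (R : realType) (V E : finType) (tail head : E -> V)
  (gamma : E -> R) (u : V) : set (E -> R) :=
  [set x | (forall e, 0 <= x e) /\ \sum_(e | tail e == u) x e = 1 /\
           (forall v, v != u -> net_flow tail head gamma x v = 0)].

Definition lagr_f (R : realType) (V E : finType) (tail head : E -> V)
  (c gamma : E -> R) (u : V) (delta : R) : \bar R :=
  ereal_inf [set ((cost c x - delta * (1 - in_gain head gamma u x))%:E) |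
             x in Dset tail head gamma u].

Definition Fu_feasible (R : realType) (V E : finType) (tail head : E -> V)
  (gamma : E -> R) (u : V) : set (E -> R) :=
  [set x | Dset tail head gamma u x /\ 0 < 1 - in_gain head gamma u x].

Definition Fu_value (R : realType) (V E : finType) (tail head : E -> V)
  (c gamma : E -> R) (u : V) : \bar R :=
  ereal_inf [set ((cost c x / (1 - in_gain head gamma u x))%:E) |
             x in Fu_feasible tail head gamma u].

From HB Require Import structures.
From mathcomp Require Import all_boot all_order all_algebra.
From mathcomp Require Import boolp classical_sets reals constructive_ereal ereal.
From mathcomp Require Import ring lra.
Import Order.TTheory GRing.Theory Num.Theory.
Local Open Scope ring_scope.

(* On D the numerator N := c^T x and the denominator Q := 1 - sum_{delta^-(u)}
   gamma_e x_e are affine, so the image of D under (N, Q) is convex and the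
   Lagrangian N - dbar Q vanishes at x.  If some xbar in D has Q xbar <= 0 and
   a negative Lagrangian, the segment from x to xbar crosses Q = 0 at a point w
   with N w < 0; moving from w slightly towards x gives feasible points with
   tiny positive denominator and numerator near N w, so the ratio is unbounded
   below.  If f(dbar) = -oo, a point of very negative Lagrangian either falls
   into the previous case or has 0 < Q <= 1 (as gamma >= 0), and then
   N / Q = dbar + (N - dbar Q) / Q is itself very negative. *)

Section LinearFractional.
Local Set Implicit Arguments.
Local Unset Strict Implicit.
Context {R : realType} {T : Type}.
Variables (S : set T) (N Q : T -> R).

Definition frac_feasible : set T := [set z | S z /\ 0 < Q z].

Definition frac_value : \bar R :=
  ereal_inf [set (N z / Q z)%:E | z in frac_feasible].

Definition lagrangian (d : R) (z : T) : R := N z - d * Q z.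

Definition lagr_value (d : R) : \bar R :=
  ereal_inf [set (lagrangian d z)%:E | z in S].

Definition frac_unbounded : Prop :=
  forall M : R, exists2 z, frac_feasible z & N z < M * Q z.

Definition convex_image : Prop :=
  forall x y (s : R), S x -> S y -> 0 <= s <= 1 ->
  exists2 z, S z & N z = (1 - s) * N x + s * N y /\
                   Q z = (1 - s) * Q x + s * Q y.

Lemma frac_value_ninfty : frac_unbounded -> frac_value = -oo%E.
Proof.
move=> unbdd; apply: eq_ninfty => M; apply: ge_ereal_inf.
have [z feas_z ltM] := unbdd M.
exists (N z / Q z)%:E; first by exists z.
by rewrite lee_fin ltW // ltr_pdivrMr //; case: feas_z.
Qed.

Lemma lagrangian_ratio z : Q z != 0 -> lagrangian (N z / Q z) z = 0.
Proof. by move=> Qz_neq0; rewrite /lagrangian divfK // subrr. Qed.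

Lemma lagrangian_conv d x y s z :
  N z = (1 - s) * N x + s * N y -> Q z = (1 - s) * Q x + s * Q y ->
  lagrangian d z = (1 - s) * lagrangian d x + s * lagrangian d y.
Proof. by rewrite /lagrangian => -> ->; ring. Qed.

Hypothesis image_convex : convex_image.

Lemma exists_Q0_N_lt0 d x y : S x -> 0 < Q x -> lagrangian d x <= 0 ->
  S y -> Q y <= 0 -> lagrangian d y < 0 ->
  exists2 w, S w & Q w = 0 /\ N w < 0.
Proof.
move=> Sx Qx_gt0 Lx_le0 Sy Qy_le0 Ly_lt0.
have gap_gt0 : 0 < Q x - Q y by lra.
pose s := Q x / (Q x - Q y).
have s_gt0 : 0 < s by rewrite divr_gt0.
have s01 : 0 <= s <= 1 by rewrite ltW //= ler_pdivrMr // mul1r; lra.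
have [w Sw [Nw Qw]] := image_convex Sx Sy s01.
have Qw0 : Q w = 0 by rewrite Qw /s; field; rewrite gt_eqF.
exists w => //; split => //.
have -> : N w = lagrangian d w by rewrite /lagrangian Qw0 mulr0 subr0.
rewrite (lagrangian_conv d Nw Qw).
have : 0 <= 1 - s by lra.
nra.
Qed.

Lemma frac_unbounded_of_Q0 x w : S x -> 0 < Q x ->
  S w -> Q w = 0 -> N w < 0 -> frac_unbounded.
Proof.
move=> Sx Qx_gt0 Sw Qw0 Nw_lt0 M.
pose k := N x - M * Q x - N w.
have k_le : N x - M * Q x - N w <= `|k| := ler_norm k.
(* On the segment from w to x at parameter l, N - M Q = N w + l k, and this
   choice of l makes it at most l N w < 0. *)
pose l := - N w / (`|k| - N w).
have den_gt0 : 0 < `|k| - N w by have := normr_ge0 k; lra.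
have l_gt0 : 0 < l by rewrite divr_gt0 // oppr_gt0.
have l01 : 0 <= l <= 1.
  by rewrite ltW //= ler_pdivrMr // mul1r; have := normr_ge0 k; lra.
have l_den : l * (`|k| - N w) = - N w by rewrite divfK // gt_eqF.
have [z Sz [Nz Qz]] := image_convex Sw Sx l01.
exists z; first by split; rewrite // Qz Qw0; nra.
by rewrite Nz Qz Qw0; nra.
Qed.

Lemma frac_unbounded_of_lagrangian_lt0 d x y : S x -> 0 < Q x ->
  lagrangian d x <= 0 -> S y -> Q y <= 0 -> lagrangian d y < 0 ->
  frac_unbounded.
Proof.
move=> Sx Qx_gt0 Lx_le0 Sy Qy_le0 Ly_lt0.
have [w Sw [Qw0 Nw_lt0]] := exists_Q0_N_lt0 Sx Qx_gt0 Lx_le0 Sy Qy_le0 Ly_lt0.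
exact: frac_unbounded_of_Q0 Sx Qx_gt0 Sw Qw0 Nw_lt0.
Qed.

Lemma frac_unbounded_of_lagr_value_ninfty d x B : S x -> 0 < Q x ->
  lagrangian d x <= 0 -> (forall z, S z -> Q z <= B) ->
  lagr_value d = -oo%E -> frac_unbounded.
Proof.
move=> Sx Qx_gt0 Lx_le0 Q_le_B lagr_ninfty M.
have [_ [y Sy <-]] := lb_ereal_infNy_adherent (- (`|d - M| * `|B|)) lagr_ninfty.
rewrite lte_fin => Ly_lt.
have dM_ge0 := normr_ge0 (d - M); have B_ge0 := normr_ge0 B.
have [Qy_le0 | Qy_gt0] := leP (Q y) 0.
  have Ly_lt0 : lagrangian d y < 0.
    by apply: lt_le_trans Ly_lt _; rewrite oppr_le0 mulr_ge0.
  exact: frac_unbounded_of_lagrangian_lt0 Sx Qx_gt0 Lx_le0 Sy Qy_le0 Ly_lt0 M.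
exists y => //.
have Qy_le : Q y <= `|B| := le_trans (Q_le_B y Sy) (ler_norm B).
have := ler_norm (d - M); rewrite /lagrangian in Ly_lt; nra.
Qed.

End LinearFractional.

Lemma sum_conv (R : comPzRingType) (I : finType) (P : pred I) (a b : R)
    (x y : I -> R) :
  \sum_(i | P i) (a * x i + b * y i) =
  a * \sum_(i | P i) x i + b * \sum_(i | P i) y i.
Proof. by rewrite big_split /= -!mulr_sumr. Qed.

Lemma sum_mul_conv (R : comPzRingType) (I : finType) (P : pred I) (a b : R)
    (w x y : I -> R) :
  \sum_(i | P i) w i * (a * x i + b * y i) =
  a * \sum_(i | P i) w i * x i + b * \sum_(i | P i) w i * y i.
Proof. by rewrite -sum_conv; apply: eq_bigr => i _; ring. Qed.

Section GeneralizedFlows.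
Local Set Implicit Arguments.
Local Unset Strict Implicit.
Context {R : realType} {V E : finType}.
Variables (tail head : E -> V) (c gamma : E -> R) (u : V).

Definition flow_conv (s : R) (x y : E -> R) : E -> R :=
  fun e => (1 - s) * x e + s * y e.

Lemma cost_conv s x y :
  cost c (flow_conv s x y) = (1 - s) * cost c x + s * cost c y.
Proof. exact: sum_mul_conv. Qed.

Lemma in_gain_conv s x y :
  in_gain head gamma u (flow_conv s x y) =
  (1 - s) * in_gain head gamma u x + s * in_gain head gamma u y.
Proof. exact: sum_mul_conv. Qed.

Lemma net_flow_conv s x y v :
  net_flow tail head gamma (flow_conv s x y) v =
  (1 - s) * net_flow tail head gamma x v + s * net_flow tail head gamma y v.
Proof. by rewrite /net_flow sum_conv sum_mul_conv; ring. Qed.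

Lemma Dset_conv s x y : 0 <= s <= 1 ->
  Dset tail head gamma u x -> Dset tail head gamma u y ->
  Dset tail head gamma u (flow_conv s x y).
Proof.
move=> /andP[s_ge0 s_le1] [x_ge0 [x_out x_net]] [y_ge0 [y_out y_net]].
split; [|split].
- by move=> e; rewrite addr_ge0 ?mulr_ge0 ?subr_ge0.
- by rewrite sum_conv x_out y_out !mulr1 subrK.
- by move=> v v_neq_u; rewrite net_flow_conv x_net ?y_net // !mulr0 addr0.
Qed.

Lemma Dset_convex_image :
  convex_image (Dset tail head gamma u) (cost c)
    (fun x => 1 - in_gain head gamma u x).
Proof.
move=> x y s Dx Dy s01; exists (flow_conv s x y); first exact: Dset_conv.
by rewrite cost_conv in_gain_conv; split=> //; ring.
Qed.

Lemma in_gain_ge0 x : (forall e, 0 <= gamma e) ->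
  Dset tail head gamma u x -> 0 <= in_gain head gamma u x.
Proof.
by move=> gamma_ge0 [x_ge0 _]; apply: sumr_ge0 => e _; rewrite mulr_ge0.
Qed.

End GeneralizedFlows.

Theorem lemma4p4 (R : realType) (V E : finType) (tail head : E -> V)
  (c gamma : E -> R) (u : V)
  (hgamma : forall e, 0 < gamma e)
  (x : E -> R) (hx : Fu_feasible tail head gamma u x) :
  let dbar := cost c x / (1 - in_gain head gamma u x) in
  (lagr_f tail head c gamma u dbar = -oo%E \/
   exists xbar : E -> R,
     [/\ Dset tail head gamma u xbar,
         1 - in_gain head gamma u xbar <= 0,
         cost c xbar - dbar * (1 - in_gain head gamma u xbar) < 0 &
         lagr_f tail head c gamma u dbar =
           (cost c xbar - dbar * (1 - in_gain head gamma u xbar))%:E]) ->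
  Fu_value tail head c gamma u = -oo%E.
Proof.
move=> dbar lagr_cases.
pose Q z := 1 - in_gain head gamma u z.
have convex : convex_image (Dset tail head gamma u) (cost c) Q.
  exact: Dset_convex_image.
have [Dx Qx_gt0] := hx.
have Lx_le0 : lagrangian (cost c) Q dbar x <= 0.
  by rewrite lagrangian_ratio ?gt_eqF.
apply: (@frac_value_ninfty _ _ _ (cost c) Q).
case: lagr_cases => [lagr_ninfty | [y [Dy Qy_le0 Ly_lt0 _]]].
- apply: (frac_unbounded_of_lagr_value_ninfty convex Dx Qx_gt0 Lx_le0 (B := 1))
      lagr_ninfty => z Dz.
  by rewrite /Q lerBlDr lerDl (in_gain_ge0 (fun e => ltW (hgamma e)) Dz).
- exact: (frac_unbounded_of_lagrangian_lt0 convex Dx Qx_gt0 Lx_le0 Dy Qy_le0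
            Ly_lt0).
Qed.
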